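(* Let $B$ be an affine domain over an infinite field $k$. Let $f \in B$ be such that $f - \lambda$ is a prime element of $B$ for infinitely many $\lambda \in k$. Let $\phi : B \to B[U]$ be a non-trivial exponential map on $B$ such that $f \in B^{\phi}$. Then there exists $\beta \in k$ such that $f-\beta$ is a prime element of $B$ and $\phi$ induces a non-trivial exponential map on $B/(f-\beta)B$, i.e. the composite $B \xrightarrow{\phi} B[U] \to (B/(f-\beta)B)[U]$ factors through a map $\phi_1 : B/(f-\beta)B \to (B/(f-\beta)B)[U]$ which is a non-trivial exponential map.
   Context: For a $k$-algebra $A$ and an indeterminate $U$ over $A$, a $k$-algebra homomorphism $\phi = \phi_U : A \to A[U]$ is an exponential map on $A$ if (i) $\varepsilon_0 \circ \phi_U$ is the identity of $A$, where $\varepsilon_0 : A[U]\to A$ is evaluation at $U=0$; and (ii) $\phi_V \circ \phi_U = \phi_{V+U}$, where $\phi_V: A \to A[V]$ (same map with $U$ replaced by another indeterminate $V$) is extended to $A[U] \to A[V,U]$ by $\phi_V(U)=U$. The ring of invariants is $A^{\phi} = \{a\in A : \phi(a) = a\}$, and $\phi$ is non-trivial if $A^\phi \neq A$. *)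

From HB Require Import structures.
From mathcomp Require Import all_boot all_order all_algebra.
From mathcomp Require mpoly.
Set Implicit Arguments. Unset Strict Implicit. Unset Printing Implicit Defensive.
Import Order.TTheory GRing.Theory Num.Theory.
Local Open Scope ring_scope.

Section Defs.
Variable k : fieldType.

Definition infinite_field := forall s : seq k, exists x : k, x \notin s.

Variable A : comAlgType k.

Definition divides (a b : A) := exists c : A, b = a * c.
Definition is_unit_elt (a : A) := exists c : A, a * c = 1.
Definition prime_elt (p : A) :=
  [/\ p != 0, ~ is_unit_elt p &
      forall b c : A, divides p (b * c) -> divides p b \/ divides p c].

Definition is_domain :=
  (1 : A) != 0 /\ forall a b : A, a * b = 0 -> a = 0 \/ b = 0.

Definition fin_gen_alg :=
  exists (n : nat) (g : 'I_n -> A),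
    forall b : A, exists p : mpoly.mpoly n k, b = mpoly.mmap (in_alg A) g p.

Definition affine_domain := is_domain /\ fin_gen_alg.

(* For condition (ii), A[V,U] is modelled as {poly {poly A}}: the inner
   variable is V (= 'X%:P) and the outer variable is U (= 'X).  Then
   phi_V (phi_U a) = map_poly phi (phi a), and
   phi_{V+U} a = sum_j b_j (V+U)^j where phi a = sum_j b_j U^j. *)
Definition is_exponential_map (phi : {rmorphism A -> {poly A}}) :=
  [/\ (forall c : k, phi (c%:A) = (c%:A)%:P),
      (forall a : A, (phi a).[0] = a) &
      (forall a : A, map_poly phi (phi a) =
         (map_poly (fun b : A => (b%:P)%:P : {poly {poly A}}) (phi a))
           .[('X : {poly A})%:P + 'X])].

Definition exp_invariant (phi : {rmorphism A -> {poly A}}) (a : A) := phi a = a%:P.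
Definition nontrivial_exp (phi : {rmorphism A -> {poly A}}) := exists a : A, ~ exp_invariant phi a.

End Defs.

Definition is_quotient_by (k : fieldType) (B Q : comAlgType k)
    (a : B) (pi : {rmorphism B -> Q}) :=
  [/\ (forall c : k, pi (c%:A) = c%:A),
      (forall q : Q, exists b : B, pi b = q) &
      (forall b : B, pi b = 0 <-> divides a b)].

(* Pick [b] with [phi b <> b] and let [c] be the leading coefficient of
   [phi b - b].  [B] is Noetherian by Hilbert's basis theorem, so ascending
   chains of principal ideals stabilise and the nonzero [c] is divisible by only
   finitely many of the pairwise non-associate primes [f - lam]; choose a prime
   [f - beta] not dividing [c].  Being [phi]-invariant, [f - beta] generates an
   ideal that [phi] maps into [(f - beta)B[U]], so [phi] descends to
   [B/(f - beta)B], and there the image of [b] is not invariant because [c]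
   survives in the quotient. *)

From HB Require Import structures.
From mathcomp Require Import all_boot all_order all_algebra.
From mathcomp Require Import zify ring.
From mathcomp Require mpoly.
From Stdlib Require Import Classical ClassicalEpsilon.
Set Implicit Arguments.
Unset Strict Implicit.
Unset Printing Implicit Defensive.
Import GRing.Theory.
Local Open Scope ring_scope.

Lemma exists_minimal (T : Type) (m : T -> nat) (P : T -> Prop) :
  (exists x, P x) -> exists x, P x /\ forall y, P y -> (m x <= m y)%N.
Proof.
move=> [x Px]; move: {2}(m x) (erefl (m x)) => n.
elim/ltn_ind: n x Px => n IH x Px mx.
have [[y [Py lt_yx]]|no_smaller] := classic (exists y, P y /\ (m y < m x)%N).
  by apply: (IH (m y) _ y Py erefl); rewrite -mx.
exists x; split=> // y Py; rewrite leqNgt; apply/negP => lt_yx.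
by apply: no_smaller; exists y.
Qed.

Lemma choice_prefix (T : Type) (R : seq T -> T -> Prop) :
  (forall s, exists x, R s x) -> exists g : nat -> T, forall n, R (mkseq g n) (g n).
Proof.
move=> exR; pose next s := proj1_sig (constructive_indefinite_description _ (exR s)).
pose S n := iter n (fun s => rcons s (next s)) [::].
exists (fun n => next (S n)) => n.
have -> : mkseq (fun n => next (S n)) n = S n.
  by elim: n => [|n IH] //; rewrite mkseqS IH.
exact: proj2_sig (constructive_indefinite_description _ (exR (S n))).
Qed.

Lemma mem_mkseq_sub (T : eqType) (g : nat -> T) n m :
  (n <= m)%N -> {subset mkseq g n <= mkseq g m}.
Proof.
move=> le_nm y /mapP [j]; rewrite mem_iota => /andP [_ lt_jn] ->.
by apply: map_f; rewrite mem_iota; lia.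
Qed.

Section Ideals.
Variable R : comNzRingType.

Definition ideal (I : R -> Prop) :=
  [/\ I 0, (forall x y, I x -> I y -> I (x + y)) & (forall a x, I x -> I (a * x))].

Fixpoint ideal_span (s : seq R) (x : R) : Prop :=
  if s is a :: s' then exists r, ideal_span s' (x - r * a) else x = 0.

Definition finitely_generated (I : R -> Prop) :=
  exists s : seq R, (forall y, y \in s -> I y) /\ (forall x, I x -> ideal_span s x).

Definition noetherian := forall I, ideal I -> finitely_generated I.

Lemma ideal_span0 s : ideal_span s 0.
Proof. by elim: s => [|a s IH] //=; exists 0; rewrite mul0r subr0. Qed.

Lemma ideal_spanD s x y : ideal_span s x -> ideal_span s y -> ideal_span s (x + y).
Proof.
elim: s x y => [|a s IH] x y /=; first by move=> -> ->; rewrite addr0.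
move=> [r Hr] [r' Hr']; exists (r + r').
by have := IH _ _ Hr Hr'; congr ideal_span; rewrite mulrDl opprD addrACA.
Qed.

Lemma ideal_spanM s a x : ideal_span s x -> ideal_span s (a * x).
Proof.
elim: s x => [|b s IH] x /=; first by move=> ->; rewrite mulr0.
by move=> [r Hr]; exists (a * r); have := IH _ Hr; rewrite mulrBr mulrA.
Qed.

Lemma ideal_span_ideal s : ideal (ideal_span s).
Proof. by split; [exact: ideal_span0 | exact: ideal_spanD | exact: ideal_spanM]. Qed.

Lemma ideal_span_mem s y : y \in s -> ideal_span s y.
Proof.
elim: s => [|a s IH] //=; rewrite inE => /orP [/eqP ->|/IH span_y].
  by exists 1; rewrite mul1r subrr; apply: ideal_span0.
by exists 0; rewrite mul0r subr0.
Qed.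

Lemma ideal_span_min I s x : ideal I -> (forall y, y \in s -> I y) ->
  ideal_span s x -> I x.
Proof.
move=> [I0 ID IM]; elim: s x => [|a s IH] x /=; first by move=> _ ->.
move=> sI [r Hr]; rewrite -(subrK (r * a) x); apply: ID.
  by apply: IH Hr => y s_y; apply: sI; rewrite inE s_y orbT.
by apply: IM; apply: sI; rewrite mem_head.
Qed.

Lemma ideal_span_sub s t x : {subset s <= t} -> ideal_span s x -> ideal_span t x.
Proof.
move=> sub_st; apply: ideal_span_min; first exact: ideal_span_ideal.
by move=> y /sub_st; apply: ideal_span_mem.
Qed.

Lemma noetherian_acc (L : nat -> R -> Prop) : noetherian ->
  (forall n, ideal (L n)) -> (forall n m x, (n <= m)%N -> L n x -> L m x) ->
  exists N, forall n x, L n x -> L N x.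
Proof.
move=> noethR idealL monoL.
pose U x := exists n, L n x.
have idealU : ideal U.
  split; first by exists 0%N; have [] := idealL 0%N.
    move=> x y [n Lx] [m Ly]; exists (maxn n m); have [_ LD _] := idealL (maxn n m).
    by apply: LD; [apply: monoL Lx; rewrite leq_maxl | apply: monoL Ly; rewrite leq_maxr].
  by move=> a x [n Lx]; exists n; have [_ _ LM] := idealL n; apply: LM.
have [t [tU Ut]] := noethR U idealU.
have [N tLN] : exists N, forall y, y \in t -> L N y.
  elim: t tU {Ut} => [|y t IH] tU; first by exists 0%N.
  have [n Ly] := tU y (mem_head _ _).
  have [N tLN] := IH (fun z t_z => tU z (mem_behead (s := y :: t) t_z)).
  exists (maxn n N) => z; rewrite inE => /orP [/eqP ->|t_z].
    by apply: monoL Ly; rewrite leq_maxl.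
  by apply: monoL (tLN z t_z); rewrite leq_maxr.
by exists N => n x Lx; apply: ideal_span_min (idealL N) tLN (Ut x _); exists n.
Qed.

Lemma greedy_generators (I : R -> Prop) (m : R -> nat) : ~ finitely_generated I ->
  exists g : nat -> R, forall n, [/\ I (g n), ~ ideal_span (mkseq g n) (g n) &
    forall h, I h -> ~ ideal_span (mkseq g n) h -> (m (g n) <= m h)%N].
Proof.
move=> not_fg.
have [g gP] : exists g : nat -> R, forall n, (forall y, y \in mkseq g n -> I y) ->
    [/\ I (g n), ~ ideal_span (mkseq g n) (g n) &
     forall h, I h -> ~ ideal_span (mkseq g n) h -> (m (g n) <= m h)%N].
  apply: (@choice_prefix _ (fun s x => (forall y, y \in s -> I y) ->
    [/\ I x, ~ ideal_span s x & forall h, I h -> ~ ideal_span s h -> (m x <= m h)%N])).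
  move=> s.
  have [sI|not_sI] := classic (forall y, y \in s -> I y); last by exists 0 => /not_sI.
  have outside_s : exists x, I x /\ ~ ideal_span s x.
    apply: NNPP => none; apply: not_fg; exists s; split=> // x Ix.
    by apply: NNPP => not_span; apply: none; exists x.
  have [h [[Ih not_span_h] min_h]] := exists_minimal m outside_s.
  by exists h => _; split=> // h' Ih' not_span; apply: min_h.
have gI n : forall y, y \in mkseq g n -> I y.
  elim: n => [|n IH] y //; rewrite mkseqS mem_rcons inE => /orP [/eqP ->|/IH //].
  by have [] := gP n IH.
by exists g => n; apply: gP (gI n).
Qed.

End Ideals.
Arguments ideal {R}.
Arguments ideal_span {R}.
Arguments noetherian R : clear implicits.

Lemma ideal_span_map (R S : comNzRingType) (h : {rmorphism R -> S}) s x :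
  ideal_span s x -> ideal_span (map h s) (h x).
Proof.
elim: s x => [|a s IH] x /=; first by move=> ->; rewrite rmorph0.
by move=> [r Hr]; exists (h r); have := IH _ Hr; rewrite rmorphB rmorphM.
Qed.

Lemma noetherian_image (R S : comNzRingType) (h : {rmorphism R -> S}) :
  (forall y, exists x, h x = y) -> noetherian R -> noetherian S.
Proof.
move=> h_surj noethR I [I0 ID IM].
have idealIh : ideal (fun x => I (h x)).
  split; first by rewrite rmorph0.
    by move=> x y Ix Iy; rewrite rmorphD; apply: ID.
  by move=> a x Ix; rewrite rmorphM; apply: IM.
have [s [sI Is]] := noethR _ idealIh.
exists (map h s); split; first by move=> y /mapP [x s_x ->]; apply: sI.
by move=> y Iy; have [x hx] := h_surj y; rewrite -hx; apply/ideal_span_map/Is; rewrite hx.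
Qed.

Lemma noetherian_field (F : fieldType) : noetherian F.
Proof.
move=> I [I0 ID IM].
have [[x [Ix x_neq0]]|I_eq0] := classic (exists x, I x /\ x != 0).
  exists [:: 1]; split; last by move=> y _; exists y; rewrite mulr1 subrr.
  by move=> y; rewrite inE => /eqP ->; rewrite -(mulVf x_neq0); apply: IM.
exists [::]; split=> // y Iy /=; apply/eqP; apply: contraT => y_neq0.
by apply/negP => _; apply: I_eq0; exists y.
Qed.

Lemma ideal_span_lead_coef (R : comNzRingType) (s : seq {poly R}) m a :
  (0 < m)%N -> (forall h, h \in s -> (size h <= m)%N) ->
  ideal_span (map lead_coef s) a ->
  exists q, [/\ ideal_span s q, (size q <= m)%N & q`_m.-1 = a].
Proof.
elim: s a => [|h s IH] a m_gt0 size_s /=.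
  by move=> ->; exists 0; rewrite size_poly0 coef0.
move=> [r span_r].
have [q [span_q size_q q_top]] :=
  IH _ m_gt0 (fun y s_y => size_s y (mem_behead (s := h :: s) s_y)) span_r.
have size_h := size_s h (mem_head _ _).
(* Shift [h] up so that its leading coefficient sits at degree [m.-1]. *)
exists (q + r *: ('X^(m - size h) * h)); split.
- by exists (r%:P * 'X^(m - size h)); rewrite -mulrA mul_polyC addrK.
- rewrite (leq_trans (size_polyD _ _)) // geq_max size_q /=.
  apply/leq_sizeP => i le_mi; rewrite coefZ coefXnM.
  case: ifP => _; first by rewrite mulr0.
  (* [set] merges the two elaborations of [size h] into one atom for [lia]. *)
  rewrite nth_default ?mulr0 //; set n := size h in size_h *; lia.
- rewrite coefD q_top coefZ coefXnM; case: ifP => lt_top.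
    have -> : h = 0.
      apply/eqP; rewrite -size_poly_eq0; apply/eqP.
      by set n := size h in size_h lt_top *; lia.
    by rewrite lead_coef0 !mulr0 subr0 addr0.
  have -> : (m.-1 - (m - size h) = (size h).-1)%N.
    by set n := size h in size_h lt_top *; lia.
  by rewrite -lead_coefE subrK.
Qed.

Lemma size_subr_lt (R : comNzRingType) (p q : {poly R}) m :
  (0 < m)%N -> (size p <= m)%N -> (size q <= m)%N -> p`_m.-1 = q`_m.-1 ->
  (size (p - q)%R < m)%N.
Proof.
move=> m_gt0 size_p size_q eq_top.
have : (size (p - q)%R <= m)%N.
  by rewrite (leq_trans (size_polyD _ _)) // geq_max size_p size_polyN.
rewrite leq_eqVlt => /orP [/eqP size_pq|//].
have : lead_coef (p - q) = 0 by rewrite lead_coefE size_pq coefB eq_top subrr.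
move/eqP; rewrite lead_coef_eq0 => /eqP pq0.
by move: size_pq; rewrite pq0 size_poly0; lia.
Qed.

(* Hilbert's basis theorem: if [I] is not finitely generated, the leading
   coefficients of its greedy generators of least size span a chain that is
   stationary from some [N] on; subtracting from [g N] a combination of earlier
   [g j] with the same top coefficient leaves a smaller element of [I] outside
   their span. *)
Lemma noetherian_poly (R : comNzRingType) : noetherian R -> noetherian {poly R}.
Proof.
move=> noethR I idealI; have [_ ID IM] := idealI.
apply: NNPP => /(greedy_generators (fun h : {poly R} => size h)) [g gP].
have gI n : forall y, y \in mkseq g n -> I y.
  by move=> y /mapP [j _ ->]; have [] := gP j.
pose L n := ideal_span (map lead_coef (mkseq g n)).
have [N LN] : exists N, forall n x, L n x -> L N x.
  apply: noetherian_acc => // [n|n m x le_nm]; first exact: ideal_span_ideal.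
  by apply: ideal_span_sub; apply/sub_map/mem_mkseq_sub.
have [IgN not_span_gN min_gN] := gP N.
have lead_gN : L N (lead_coef (g N)).
  by apply: (LN N.+1); apply/ideal_span_mem/map_f; rewrite mkseqS mem_rcons mem_head.
have size_gN : (0 < size (g N))%N.
  rewrite size_poly_gt0; apply/eqP => gN0; apply: not_span_gN.
  by rewrite gN0; apply: ideal_span0.
have size_prefix h : h \in mkseq g N -> (size h <= size (g N))%N.
  move=> /mapP [j]; rewrite mem_iota => /andP [_ lt_jN] ->.
  have [_ _ min_gj] := gP j; apply: min_gj => // span_j; apply: not_span_gN.
  by apply: ideal_span_sub span_j; apply: mem_mkseq_sub; lia.
have [q [span_q size_q q_top]] := ideal_span_lead_coef size_gN size_prefix lead_gN.
have Iq : I q := ideal_span_min idealI (gI N) span_q.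
have := min_gN (g N - q); rewrite leqNgt => /(_ _ _)/negP; apply.
- by apply: ID => //; rewrite -mulN1r; apply: IM.
- by move=> span_diff; apply: not_span_gN; rewrite -(subrK q (g N)); apply: ideal_spanD.
- by apply: size_subr_lt => //; rewrite q_top -lead_coefE.
Qed.

Section FiniteType.
Variable k : fieldType.

Fixpoint iter_poly (m : nat) : comNzRingType :=
  if m is m'.+1 then {poly iter_poly m'} else k.

Lemma noetherian_iter_poly m : noetherian (iter_poly m).
Proof. by elim: m => [|m IH] /=; [exact: noetherian_field | exact: noetherian_poly]. Qed.

Variable B : comAlgType k.

(* [iter_horner [:: g_1; ...; g_m]] evaluates [k[X_m]...[X_1]] at [X_i := g_i]. *)
Fixpoint iter_horner (gs : seq B) : {rmorphism iter_poly (size gs) -> B} :=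
  match gs return {rmorphism iter_poly (size gs) -> B} with
  | [::] => in_alg B
  | g :: gs' => horner_morph (fun x => mulrC g (iter_horner gs' x))
  end.

Definition in_iter_horner_range gs (b : B) := exists p, iter_horner gs p = b.

Lemma iter_horner_range_cons g gs b :
  in_iter_horner_range gs b -> in_iter_horner_range (g :: gs) b.
Proof. by move=> [p <-]; exists p%:P; rewrite /= horner_morphC. Qed.

Lemma iter_horner_range_alg gs c : in_iter_horner_range gs c%:A.
Proof. by elim: gs => [|g gs IH]; [exists c | exact: iter_horner_range_cons]. Qed.

Lemma iter_horner_range_mem gs y : y \in gs -> in_iter_horner_range gs y.
Proof.
elim: gs => [|g gs IH] //; rewrite inE => /orP [/eqP ->|/IH].
  by exists 'X; rewrite /= horner_morphX.
exact: iter_horner_range_cons.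
Qed.

Lemma iter_horner_rangeD gs x y : in_iter_horner_range gs x ->
  in_iter_horner_range gs y -> in_iter_horner_range gs (x + y).
Proof. by move=> [p <-] [q <-]; exists (p + q); rewrite rmorphD. Qed.

Lemma iter_horner_rangeM gs x y : in_iter_horner_range gs x ->
  in_iter_horner_range gs y -> in_iter_horner_range gs (x * y).
Proof. by move=> [p <-] [q <-]; exists (p * q); rewrite rmorphM. Qed.

Lemma iter_horner_rangeX gs x e :
  in_iter_horner_range gs x -> in_iter_horner_range gs (x ^+ e).
Proof. by move=> [p <-]; exists (p ^+ e); rewrite rmorphXn. Qed.

Lemma iter_horner_range_mmap n (g : 'I_n -> B) gs (p : mpoly.mpoly n k) :
  (forall i, g i \in gs) -> in_iter_horner_range gs (mpoly.mmap (in_alg B) g p).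
Proof.
move=> gs_g; rewrite /mpoly.mmap; elim/big_ind: _ => [|x y|m _].
- by exists 0; rewrite rmorph0.
- exact: iter_horner_rangeD.
apply: iter_horner_rangeM; first exact: iter_horner_range_alg.
rewrite /mpoly.mmap1; elim/big_ind: _ => [|x y|i _]; first by exists 1; rewrite rmorph1.
  exact: iter_horner_rangeM.
by apply: iter_horner_rangeX; apply: iter_horner_range_mem.
Qed.

Lemma noetherian_fin_gen_alg : fin_gen_alg B -> noetherian B.
Proof.
move=> [n [g gen_g]].
pose gs := [seq g i | i <- enum 'I_n].
apply: (@noetherian_image _ _ (iter_horner gs)); last exact: noetherian_iter_poly.
move=> b; have [p ->] := gen_g b; apply: iter_horner_range_mmap => i.
by apply: map_f; rewrite mem_enum.
Qed.

End FiniteType.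

Section PrimeDivisors.
Variables (k : fieldType) (A : comAlgType k).

Lemma prime_elt_divides_prod (q : A) n (F : nat -> A) : prime_elt q ->
  divides q (\prod_(j < n) F j) -> exists2 j, (j < n)%N & divides q (F j).
Proof.
move=> [_ q_nunit q_prime]; elim: n => [|n IH].
  by rewrite big_ord0 => [[c qc]]; case: q_nunit; exists c.
rewrite big_ord_recr /= => /q_prime [/IH [j lt_jn q_Fj]|q_Fn]; last by exists n.
by exists j => //; rewrite ltnW.
Qed.

Lemma shift_not_divides (f : A) (lam mu : k) : lam != mu ->
  prime_elt (f - lam%:A) -> ~ divides (f - lam%:A) (f - mu%:A).
Proof.
move=> lam_neq_mu [_ nunit _] [e fe]; apply: nunit.
(* [f - mu = (f - lam) e] gives [lam - mu = (f - lam) (e - 1)], a nonzero scalar. *)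
have lam_mu : (lam - mu)%:A = (f - lam%:A) * (e - 1).
  by rewrite mulrBr mulr1 -fe scalerBl; ring.
exists ((e - 1) * (lam - mu)^-1%:A).
by rewrite mulrA -lam_mu -scalerAl mul1r scalerA mulfV ?scale1r // subr_eq0.
Qed.

Hypotheses (noethA : noetherian A) (domA : is_domain A).

Lemma domain_mulfI (x y z : A) : x != 0 -> x * y = x * z -> y = z.
Proof.
move=> x_neq0 xyz; have : x * (y - z) = 0 by rewrite mulrBr xyz subrr.
case/domA.2 => [x0|/eqP]; first by rewrite x0 eqxx in x_neq0.
by rewrite subr_eq0 => /eqP.
Qed.

(* ACC for principal ideals: the cofactors [c / (p 0 ... p (n-1))] generate an
   ascending chain, which stabilises only if some [p n] is a unit. *)
Lemma noetherian_divisor_chain (c : A) (p : nat -> A) : c != 0 ->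
  (forall n, divides (\prod_(j < n) p j) c) -> exists n, is_unit_elt (p n).
Proof.
move=> c_neq0 dvd_prod; pose P n := \prod_(j < n) p j.
have PS n : P n.+1 = P n * p n by rewrite /P big_ord_recr.
pose L n x := divides c (P n * x).
have idealL n : ideal (L n).
  split; first by exists 0; rewrite !mulr0.
    by move=> x y [u xu] [v yv]; exists (u + v); rewrite mulrDr xu yv mulrDr.
  by move=> a x [u xu]; exists (a * u); rewrite mulrCA xu mulrCA.
have monoL n m x : (n <= m)%N -> L n x -> L m x.
  move=> /subnK <-; elim: (m - n)%N => [|d IH] // Lx.
  have [u xu] := IH Lx; exists (u * p (d + n)).
  by rewrite addSn PS mulrAC xu mulrA.
have [N LN] := noetherian_acc noethA idealL monoL.
have [e ce] := dvd_prod N.+1.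
have [z ez] : L N e by apply: (LN N.+1); exists 1; rewrite -ce mulr1.
have Pe_neq0 : P N * e != 0.
  by apply: contra_neq c_neq0 => Pe0; rewrite ce -/(P N.+1) PS mulrAC Pe0 mul0r.
exists N; exists z; apply: (domain_mulfI Pe_neq0).
by rewrite mulr1 {2}ez ce -/(P N.+1) PS; ring.
Qed.

Lemma prime_seq_not_all_divide (c : A) (p : nat -> A) : c != 0 ->
  (forall n, prime_elt (p n)) -> (forall n j, (j < n)%N -> ~ divides (p n) (p j)) ->
  exists n, ~ divides (p n) c.
Proof.
move=> c_neq0 p_prime p_indep; apply: NNPP => all_divide.
have p_dvd_c n : divides (p n) c by apply: NNPP => ndvd; apply: all_divide; exists n.
have [n [u nunit]] : exists n, is_unit_elt (p n).
  apply: noetherian_divisor_chain c_neq0 _; elim=> [|n [d cd]].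
    by exists c; rewrite big_ord0 mul1r.
  have [_ _ pn_prime] := p_prime n.
  have [pn_prod|[e de]] : divides (p n) (\prod_(j < n) p j) \/ divides (p n) d.
    by apply: pn_prime; rewrite -cd.
  - have [j lt_jn pn_pj] := prime_elt_divides_prod (p_prime n) pn_prod.
    by case: (p_indep n j lt_jn).
  - by exists e; rewrite big_ord_recr /= cd de mulrA.
by have [_ []] := p_prime n; exists u.
Qed.

Lemma exists_prime_shift_not_dividing (f c : A) : c != 0 ->
  (forall s : seq k, exists lam : k, lam \notin s /\ prime_elt (f - lam%:A)) ->
  exists beta : k, prime_elt (f - beta%:A) /\ ~ divides (f - beta%:A) c.
Proof.
move=> c_neq0 shifts_prime.
have [lam lamP] := choice_prefix shifts_prime.
have shifts_indep n j : (j < n)%N -> ~ divides (f - (lam n)%:A) (f - (lam j)%:A).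
  move=> lt_jn; apply: shift_not_divides; last exact: (lamP n).2.
  by apply: contraNneq (lamP n).1 => ->; apply: map_f; rewrite mem_iota; lia.
have [n ndvd] := prime_seq_not_all_divide c_neq0 (fun n => (lamP n).2) shifts_indep.
by exists (lam n); split=> //; exact: (lamP n).2.
Qed.

End PrimeDivisors.

Section QuotientDescent.
Variables (k : fieldType) (B Q : comAlgType k) (a : B).
Variables (pi : {rmorphism B -> Q}) (phi : {rmorphism B -> {poly B}}).
Hypotheses (pi_quot : is_quotient_by a pi) (phi_a : exp_invariant phi a).

Lemma quotient_surj (q : Q) : exists b, pi b == q.
Proof. by have [_ pi_surj _] := pi_quot; have [b <-] := pi_surj q; exists b. Qed.

(* [phi (a b) = a phi b], so [phi] maps [aB] into [aB[U]]. *)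
Lemma map_phi_kernel (b : B) : pi b = 0 -> map_poly pi (phi b) = 0.
Proof.
have [_ _ pi_ker] := pi_quot; move/pi_ker => [e ->].
have pi_a : pi a = 0 by apply/pi_ker; exists 1; rewrite mulr1.
by rewrite rmorphM phi_a rmorphM /= map_polyC -[X in X%:P * _]/(pi a) pi_a mul0r.
Qed.

Definition descend (q : Q) : {poly Q} := map_poly pi (phi (xchoose (quotient_surj q))).

Lemma descendE (b : B) : descend (pi b) = map_poly pi (phi b).
Proof.
apply/eqP; rewrite -subr_eq0 -!rmorphB; apply/eqP/map_phi_kernel.
by rewrite rmorphB (eqP (xchooseP (quotient_surj (pi b)))) subrr.
Qed.

Lemma descend_is_zmod_morphism : zmod_morphism descend.
Proof.
have [_ pi_surj _] := pi_quot.
move=> x y; have [b <-] := pi_surj x; have [c <-] := pi_surj y.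
by rewrite -rmorphB !descendE !rmorphB.
Qed.

Lemma descend_is_monoid_morphism : monoid_morphism descend.
Proof.
have [_ pi_surj _] := pi_quot.
split; first by rewrite -(rmorph1 pi) descendE !rmorph1.
move=> x y; have [b <-] := pi_surj x; have [c <-] := pi_surj y.
by rewrite -rmorphM !descendE !rmorphM.
Qed.

Lemma exists_descended_rmorphism : exists phi1 : {rmorphism Q -> {poly Q}},
  forall b, phi1 (pi b) = map_poly pi (phi b).
Proof.
pose phi1 : {rmorphism Q -> {poly Q}} := HB.pack descend
  (GRing.isZmodMorphism.Build _ _ descend descend_is_zmod_morphism)
  (GRing.isMonoidMorphism.Build _ _ descend descend_is_monoid_morphism).
by exists phi1; exact: descendE.
Qed.

Variable phi1 : {rmorphism Q -> {poly Q}}.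
Hypothesis phi1_pi : forall b, phi1 (pi b) = map_poly pi (phi b).

Lemma descended_exponential_map : is_exponential_map phi -> is_exponential_map phi1.
Proof.
have [pi_scalar pi_surj _] := pi_quot; move=> [phi_scalar phi_at0 phi_comp].
split.
- move=> c; rewrite -{1}pi_scalar phi1_pi phi_scalar map_polyC /=.
  by congr (_%:P); exact: pi_scalar.
- move=> q; have [b <-] := pi_surj q.
  by rewrite phi1_pi -(rmorph0 pi) horner_map phi_at0.
move=> q; have [b <-] := pi_surj q.
rewrite phi1_pi -map_poly_comp (eq_map_poly (g := map_poly pi \o phi)) //.
rewrite map_poly_comp phi_comp -horner_map rmorphD /= map_polyX map_polyC /= map_polyX.
congr (_.[_]); apply/polyP => j.
rewrite !coef_map_id0 ?coef_map /= ?rmorph0 ?polyC0 //.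
by rewrite map_polyC; congr (_%:P); exact: map_polyC.
Qed.

Lemma descended_nontrivial (b : B) :
  ~ divides a (lead_coef (phi b - b%:P)) -> ~ exp_invariant phi1 (pi b).
Proof.
have [_ _ pi_ker] := pi_quot; move=> ndvd phi1_b; apply/ndvd/pi_ker.
have map0 : map_poly pi (phi b - b%:P) = 0.
  by rewrite rmorphB /= map_polyC -phi1_pi phi1_b subrr.
have := congr1 (fun p : {poly Q} => p`_(size (phi b - b%:P)).-1) map0.
by rewrite coef_map coef0 -lead_coefE.
Qed.

End QuotientDescent.

Unset Implicit Arguments.

Theorem lemma3p3 (k : fieldType) (B : comAlgType k) (f : B)
    (phi : {rmorphism B -> {poly B}}) :
  infinite_field k ->
  affine_domain B ->
  (forall s : seq k, exists lam : k, lam \notin s /\ prime_elt (f - lam%:A)) ->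
  is_exponential_map phi ->
  nontrivial_exp phi ->
  exp_invariant phi f ->
  exists beta : k, prime_elt (f - beta%:A) /\
    forall (Q : comAlgType k) (pi : {rmorphism B -> Q}),
      is_quotient_by (f - beta%:A) pi ->
      exists phi1 : {rmorphism Q -> {poly Q}},
        [/\ is_exponential_map phi1,
            (forall b : B, phi1 (pi b) = map_poly pi (phi b)) &
            nontrivial_exp phi1].
Proof.
move=> _ [B_dom B_fg] shifts_prime phi_exp [b b_var] f_inv.
have c_neq0 : lead_coef (phi b - b%:P) != 0.
  by rewrite lead_coef_eq0 subr_eq0; apply/eqP.
have [beta [prime_beta ndvd]] := exists_prime_shift_not_dividing
  (noetherian_fin_gen_alg B_fg) B_dom c_neq0 shifts_prime.
exists beta; split=> // Q pi pi_quot.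
have shift_inv : exp_invariant phi (f - beta%:A).
  have [phi_scalar _ _] := phi_exp.
  by rewrite /exp_invariant rmorphB f_inv phi_scalar polyCB.
have [phi1 phi1_pi] := exists_descended_rmorphism pi_quot shift_inv.
exists phi1; split=> //; first exact: (descended_exponential_map pi_quot phi1_pi phi_exp).
by exists (pi b); apply: (descended_nontrivial pi_quot phi1_pi ndvd).
Qed.
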